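(* Let $G_n(y)=\sum_{0\le k\le n}B(n,k)y^k$. Then $$\sum_{n\ge 0}G_n(y)\frac{x^n}{n!}=\frac{1}{\cos x-y\sin x}.$$ In particular $\sum_{k}B(n,k)$ equals the Springer number $S_n$, defined by $\sum_{n\ge0}S_n x^n/n!=1/(\cos x-\sin x)$.
   Context: A labeled ballot path is a lattice path from $(0,0)$ with steps $u=(1,1)$, $d=(1,-1)$ never going below the $x$-axis, each step carrying an integer label between $0$ and its height, where the height of a step is the smaller $y$-coordinate of its endpoints. $B(n,k)$ is the number of labeled ballot paths from $(0,0)$ ending at $(n,k)$. *)

From HB Require Import structures.
From mathcomp Require Import all_boot all_order all_algebra.
Set Implicit Arguments. Unset Strict Implicit. Unset Printing Implicit Defensive.
Import Order.TTheory GRing.Theory Num.Theory.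

(* A labeled ballot path is encoded as a sequence of (step, label) pairs:
   step = true for u=(1,1), false for d=(1,-1).  [lb_end h s] walks the path
   starting at height h; it returns [Some final_height] if the path never goes
   below the x-axis and every label lies between 0 and the height of its step
   (the smaller y-coordinate of its endpoints), and [None] otherwise. *)
Fixpoint lb_end (h : nat) (s : seq (bool * nat)) : option nat :=
  match s with
  | [::] => Some h
  | (true, l) :: s' => if l <= h then lb_end h.+1 s' else None
  | (false, l) :: s' =>
      if (0 < h) && (l <= h.-1) then lb_end h.-1 s' else None
  end.

(* B(n,k): number of labeled ballot paths from (0,0) to (n,k).  Labels are
   drawn from 'I_n.+1, which loses nothing since every step height is < n. *)
Definition B (n k : nat) : nat :=
  #|[set p : n.-tuple (bool * 'I_n.+1) |
       lb_end 0 [seq (x.1, nat_of_ord x.2) | x <- p] == Some k]|.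

Definition G (n : nat) : {poly int} := \sum_(k < n.+1) ((B n k)%:R *: 'X^k)%R.

(* coefficients of x^j/j! in cos x and sin x *)
Definition cos_coef (j : nat) : int := if odd j then 0%R else ((-1) ^+ (j./2))%R.
Definition sin_coef (j : nat) : int := if odd j then ((-1) ^+ (j./2))%R else 0%R.

Definition cmys_coef (j : nat) : {poly int} :=
  ((cos_coef j)%:P - (sin_coef j)%:P * 'X)%R.

From HB Require Import structures.
From mathcomp Require Import all_boot all_order all_algebra ring.
Import Order.TTheory GRing.Theory Num.Theory.

Set Implicit Arguments.
Unset Strict Implicit.
Unset Printing Implicit Defensive.

(* Classifying labeled ballot paths by their first step gives a recursion in
   the starting height h; classifying them by their last step instead gives
   B(n+1,k) = k B(n,k-1) + (k+1) B(n,k+1), that is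
   G_{n+1} = y G_n + (1 + y^2) G_n'.  For F = sum_n G_n x^n/n! this reads
   F_x = y F + (1 + y^2) F_y, and since c = cos x - y sin x satisfies
   c_x + y c = (1 + y^2) c_y, the product P = c F solves P_x = (1 + y^2) P_y
   with P(0, y) = 1, hence P = 1.  Coefficientwise, P_n is the binomial
   convolution of the coefficients of c with G, and P_{n+1} = (1 + y^2) P_n'.
   At y = 1 the row sums of B are the binomial convolution inverse of the
   coefficients of cos x - sin x, which is unique. *)

Lemma card_set_tuple0 (T : finType) (P : pred (seq T)) :
  #|[set p : 0.-tuple T | P p]| = P [::].
Proof.
have -> : [set p : 0.-tuple T | P p] = if P [::] then setT else set0.
  by apply/setP => p; rewrite (tuple0 p) inE; case: (P [::]); rewrite ?inE.
by case: (P [::]); rewrite ?cardsT ?cards0 ?card_tuple.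
Qed.

Lemma card_set_tupleS (T : finType) n (P : pred (seq T)) :
  #|[set p : n.+1.-tuple T | P p]| =
  \sum_(x : T) #|[set p : n.-tuple T | P (x :: p)]|.
Proof.
under [RHS]eq_bigr do rewrite -(sum1dep_card (fun p : n.-tuple T => P (_ :: p))).
rewrite -sum1dep_card pair_big_dep /=.
rewrite (reindex (fun q : T * n.-tuple T => [tuple of q.1 :: q.2])) //=.
exists (fun p : n.+1.-tuple T => (thead p, [tuple of behead p])).
  by move=> [x q] _ /=; congr pair; apply/val_inj.
by move=> p _; case/tupleP: p => x q; apply/val_inj.
Qed.

Lemma sum_ord_lt_const N m c : m <= N ->
  \sum_(l < N) (if l < m then c else 0) = m * c.
Proof.
move=> le_mN; rewrite -big_mkcond /= (big_ord_narrow le_mN).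
by rewrite sum_nat_const card_ord.
Qed.

Fixpoint lbpaths (n h k : nat) : nat :=
  if n is n'.+1 then h.+1 * lbpaths n' h.+1 k + h * lbpaths n' h.-1 k
  else h == k.

Lemma lbpathsS n h k :
  lbpaths n.+1 h k = h.+1 * lbpaths n h.+1 k + h * lbpaths n h.-1 k.
Proof. by []. Qed.

Definition ord_labels N (p : seq (bool * 'I_N)) : seq (bool * nat) :=
  [seq (x.1, nat_of_ord x.2) | x <- p].

Lemma card_lb_end N n h k : h + n < N ->
  #|[set p : n.-tuple (bool * 'I_N) | lb_end h (ord_labels p) == Some k]|
  = lbpaths n h k.
Proof.
pose ends_at m : pred (seq (bool * 'I_N)) :=
  fun s => lb_end m (ord_labels s) == Some k.
elim: n h => [|n IHn] h lt_hnN; first by rewrite (card_set_tuple0 (ends_at h)).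
rewrite (card_set_tupleS n (ends_at h)) -(pair_bigA _ (fun b l =>
  #|[set p : n.-tuple _ | ends_at h ((b, l) :: p)]|)) big_bool lbpathsS /=.
have card_down (l : 'I_N) : #|[set p : n.-tuple _ | ends_at h ((false, l) :: p)]| =
    if l < h then #|[set p : n.-tuple _ | ends_at h.-1 p]| else 0.
  rewrite /ends_at /=; case: h {lt_hnN IHn} => [|h] /=.
    by apply: eq_card0 => p; rewrite !inE.
  by rewrite ltnS; case: ifP => // _; apply: eq_card0 => p; rewrite !inE.
have card_up (l : 'I_N) : #|[set p : n.-tuple _ | ends_at h ((true, l) :: p)]| =
    if l < h.+1 then #|[set p : n.-tuple _ | ends_at h.+1 p]| else 0.
  by rewrite /ends_at /= ltnS; case: ifP => // _; apply: eq_card0 => p; rewrite !inE.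
under eq_bigr do rewrite card_up.
under [X in _ + X]eq_bigr do rewrite card_down.
have le_hN : h.+1 <= N by apply: leq_trans lt_hnN; rewrite ltnS leq_addr.
rewrite !sum_ord_lt_const ?(ltnW le_hN) // !IHn ?addSnnS //.
by apply: leq_ltn_trans lt_hnN; rewrite leq_add ?leq_pred ?leqnSn.
Qed.

Lemma B_lbpaths n k : B n k = lbpaths n 0 k.
Proof. exact: card_lb_end. Qed.

Lemma lbpaths_gt n h k : h + n < k -> lbpaths n h k = 0.
Proof.
elim: n h => [|n IHn] h lt_hnk /=; first by rewrite addn0 in lt_hnk; rewrite ltn_eqF.
rewrite !IHn ?muln0 ?addSnnS //.
by apply: leq_ltn_trans lt_hnk; rewrite leq_add ?leq_pred ?leqnSn.
Qed.

Lemma lbpathsSr n h k :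
  lbpaths n.+1 h k = k * lbpaths n h k.-1 + k.+1 * lbpaths n h k.+1.
Proof.
elim: n h k => [|n IHn] h k.
  by congr (_ + _); [case: k => [|k] | case: h => [|h]];
    rewrite /= ?muln0 ?eqSS //; case: eqP => [->|]; rewrite ?muln0.
by rewrite lbpathsS (IHn h.+1) (IHn h.-1) !lbpathsS; ring.
Qed.

Local Open Scope ring_scope.

Lemma coef_G n k : (G n)`_k = (B n k)%:R.
Proof.
rewrite /G coef_sum.
under eq_bigr => i _ do rewrite coefZ coefXn mulr_natr mulrb eq_sym.
rewrite -(big_mkcond (fun i : 'I_n.+1 => i == k :> nat)).
rewrite (big_ord1_eq _ (fun j => (B n j)%:R : int)).
by case: ltnP => // lt_nk; rewrite B_lbpaths lbpaths_gt.
Qed.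

Lemma GS n : G n.+1 = 'X * G n + (1 + 'X^2) * (G n)^`().
Proof.
apply/polyP => k.
rewrite coefD coefXM mulrDl mul1r coefD coefXnM !coef_deriv !coef_G !B_lbpaths.
rewrite lbpathsSr.
case: k => [|[|k]] /=.
- by rewrite mul0n mul1n add0n add0r addr0.
- by rewrite natrD !natrM !mulr_natl addr0.
- rewrite !subSS subn0 natrD !natrM !mulr_natl [_ *+ k.+2]mulrS.
  by rewrite -addrA [X in _ + X]addrC.
Qed.

Lemma cos_coefS j : cos_coef j.+1 = - sin_coef j.
Proof.
rewrite /cos_coef /sin_coef /=.
case: (boolP (odd j)) => odd_j /=; last by rewrite oppr0.
by rewrite uphalf_half odd_j exprS mulN1r.
Qed.

Lemma sin_coefS j : sin_coef j.+1 = cos_coef j.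
Proof.
rewrite /cos_coef /sin_coef /=; case: (boolP (odd j)) => //= even_j.
by rewrite uphalf_half (negbTE even_j).
Qed.

Lemma deriv_cmys_coef j : (cmys_coef j)^`() = - (sin_coef j)%:P.
Proof. by rewrite /cmys_coef derivB derivC deriv_mulC derivX mulr1 sub0r. Qed.

Section BinomialConvolution.

Variable R : pzRingType.
Implicit Types a b u v : nat -> R.

(* coefficient of x^n/n! in the product of the EGFs of a and b *)
Definition binconv a b n : R := \sum_(j < n.+1) 'C(n, j)%:R * a j * b (n - j)%N.

Lemma binconvS a b n :
  binconv a b n.+1 = binconv (fun j => a j.+1) b n + binconv a (fun j => b j.+1) n.
Proof.
rewrite /binconv big_ord_recl /=.
under eq_bigr => i _ do rewrite /bump /= add1n binS natrD !mulrDl subSS.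
rewrite big_split /= addrA addrC; congr (_ + _).
rewrite [in RHS]big_ord_recl /= !bin0 !subn0; congr (_ + _).
rewrite big_ord_recr /= bin_small // !mul0r addr0.
by apply: eq_bigr => i _; rewrite /bump /= add1n -subSn.
Qed.

Lemma binconv_unique a u v : a 0%N = 1 ->
  (forall n, binconv a u n = binconv a v n) -> u =1 v.
Proof.
move=> a0 conv_uv; elim/ltn_ind => n IHn.
have split0 w : binconv a w n =
    w n + \sum_(i < n) 'C(n, i.+1)%:R * a i.+1 * w (n - i.+1)%N.
  by rewrite /binconv big_ord_recl bin0 a0 subn0 mulr1 mul1r.
move: (conv_uv n); rewrite !split0.
under eq_bigr => i _ do rewrite IHn ?subnSK ?leq_subr //.
exact: addIr.
Qed.

End BinomialConvolution.

Lemma horner_binconv (R : comNzRingType) (p q : nat -> {poly R}) x n :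
  (binconv p q n).[x] = binconv (fun j => (p j).[x]) (fun j => (q j).[x]) n.
Proof.
rewrite /binconv horner_sum; apply: eq_bigr => j _.
by rewrite !hornerM hornerMn hornerC.
Qed.

Lemma binconv_cmys_G0 : binconv cmys_coef G 0 = 1.
Proof.
rewrite /binconv big_ord1 /cmys_coef /G big_ord1 B_lbpaths /cos_coef /sin_coef /=.
by rewrite scale1r !mul1r mul0r subr0 !expr0 polyC1 mulr1.
Qed.

Lemma binconv_cmys_GS n :
  binconv cmys_coef G n.+1 = (1 + 'X^2) * (binconv cmys_coef G n)^`().
Proof.
rewrite binconvS /binconv -big_split raddf_sum mulr_sumr /=; apply: eq_bigr => j _.
rewrite -!mulrA !mulr_natl raddfMn /= -mulrnDl mulrnAr; congr (_ *+ _).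
rewrite GS derivM deriv_cmys_coef /cmys_coef cos_coefS sin_coefS polyCN; ring.
Qed.

Lemma binconv_cmys_G n : binconv cmys_coef G n = (n == 0%N)%:R.
Proof.
case: n => [|n]; first exact: binconv_cmys_G0.
elim: n => [|n IHn]; rewrite binconv_cmys_GS ?IHn ?binconv_cmys_G0.
  by rewrite derivC mulr0.
by rewrite deriv0 mulr0.
Qed.

Lemma horner1_G m : (G m).[1] = (\sum_(k < m.+1) B m k)%:Z.
Proof.
rewrite /G horner_sum -natz natr_sum; apply: eq_bigr => k _.
by rewrite hornerZ hornerXn expr1n mulr1.
Qed.

Theorem theorem4p4 :
  (forall n : nat,
     \sum_(j < n.+1) ('C(n, j))%:R * cmys_coef j * G (n - j)%N
       = (n == 0%N)%:R)
  /\
  (forall S : nat -> int,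
     (forall n : nat,
        \sum_(j < n.+1) ('C(n, j))%:R * (cos_coef j - sin_coef j) * S (n - j)%N
          = (n == 0%N)%:R) ->
     forall n : nat, (\sum_(k < n.+1) B n k)%:Z = S n).
Proof.
split; first exact: binconv_cmys_G.
move=> S conv_S.
apply: (@binconv_unique _ (fun j => cos_coef j - sin_coef j)) => // n.
rewrite [RHS]conv_S.
have := congr1 (horner^~ 1) (binconv_cmys_G n).
rewrite horner_binconv hornerMn (hornerC 1) => <-.
rewrite /binconv; apply: eq_bigr => j _.
by rewrite horner1_G /cmys_coef !hornerE.
Qed.
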